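(* Let $r\geq 3$ be an integer, let $a,b$ be rational numbers with $0<a\leq b$, and set $h:=a+(r-1)b$. If $G$ is a balanced $r$-partite graph on $rn$ vertices with $\delta^*(G)\geq (1-b/h)n$, then $G$ admits a perfect $(a,b)$-weighted fractional $K_r$-tiling.
   Context: For an $r$-partite graph $G$ with vertex classes $V_1,\dots,V_r$, $G$ is balanced if all classes have the same size, and $\delta^*(G)$ is the largest integer $m$ such that for all $i\neq j$ every vertex of $V_i$ has at least $m$ neighbours in $V_j$. A rooted copy of $K_r$ in $G$ is a copy of $K_r$ with one vertex designated as the root. For an $(a,b)$-weighted rooted copy $K$ of $K_r$, its weighted characteristic vector $\mathbf 1_{a,b,G}(K)\in\mathbb R^{V(G)}$ has entry $a$ at the root, entry $b$ at each other vertex of $K$, and $0$ elsewhere. Let $\mathcal K_{a,b,r}(G)$ be the set of all rooted copies of $K_r$ in $G$ (with this weighting). An $(a,b)$-weighted fractional $K_r$-tiling of $G$ is an assignment of weights $w(K)\geq 0$ to $K\in\mathcal K_{a,b,r}(G)$ such that $\sum_{K}w(K)\mathbf 1_{a,b,G}(K)\leq \mathbf 1$ pointwise (where $\mathbf 1$ is the all-ones vector); it is perfect if equality holds in every coordinate. *)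

From HB Require Import structures.
From mathcomp Require Import all_boot all_order all_algebra.
Set Implicit Arguments. Unset Strict Implicit. Unset Printing Implicit Defensive.
Import Order.TTheory GRing.Theory Num.Theory.
Local Open Scope ring_scope.

Definition balanced_rpartite (T : finType) (r n : nat) (e : rel T)
    (part : T -> 'I_r) : Prop :=
  [/\ symmetric e, irreflexive e,
      (forall x y, e x y -> part x != part y) &
      (forall i : 'I_r, #|[set v | part v == i]| = n)].

Definition deg_into (T : finType) (r : nat) (e : rel T) (part : T -> 'I_r)
    (v : T) (j : 'I_r) : nat :=
  #|[set u | (part u == j) && e v u]|.

Definition delta_star_ge (R : realFieldType) (T : finType) (r : nat)
    (e : rel T) (part : T -> 'I_r) (x : R) : Prop :=
  forall (v : T) (j : 'I_r), j != part v -> x <= (deg_into e part v j)%:R.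

Definition rooted_Kr (T : finType) (r : nat) (e : rel T) (K : {set T} * T)
    : bool :=
  [&& #|K.1| == r, K.2 \in K.1 &
      [forall x in K.1, forall y in K.1, (x != y) ==> e x y]].

Definition wchar (R : pzRingType) (T : finType) (a b : R) (K : {set T} * T)
    (v : T) : R :=
  if v == K.2 then a else if v \in K.1 then b else 0.

Definition perfect_frac_tiling (R : realFieldType) (T : finType) (r : nat)
    (e : rel T) (a b : R) (w : {set T} * T -> R) : Prop :=
  (forall K, rooted_Kr r e K -> 0 <= w K) /\
  (forall v : T, \sum_(K | rooted_Kr r e K) w K * wchar a b K v = 1).

From HB Require Import structures.
From mathcomp Require Import all_boot all_order all_algebra.
From Stdlib Require Import Classical.
From mathcomp Require Import ring zify.
Import Order.TTheory GRing.Theory Num.Theory.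
Local Open Scope ring_scope.
Set Implicit Arguments. Unset Strict Implicit. Unset Printing Implicit Defensive.

(* By Farkas' lemma a perfect tiling exists unless some y : V -> R gives every
   rooted K_r a nonnegative weight a y(root) + b (sum of y over the others) while
   sum_v y v < 0.  Write a = A s and b = B s with positive integers A, B and put
   N = A + (r-1) B.  Every vertex misses at most B n / N vertices of each other
   class, so greedily, for distinct classes c_0, ..., c_(r-1) and ranks p_i with
   i B n < N (p_i + 1), one finds a clique x_0, ..., x_(r-1) with x_i in c_i and
   y(x_i) at most the p_i-th smallest value of y on c_i.  Rooting it at x_(r-1)
   yields A z_(r-1) + B (z_0 + ... + z_(r-2)) >= 0 for these order statistics
   z_i.  Averaging over the cyclic shifts of the classes and over rank choices
   that use every rank of every class equally often turns the sum of these
   inequalities into A B N (sum_v y v) >= 0. *)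

Section Farkas.
Variables (R : realFieldType) (T : finType).

Lemma sum_mul_le0_eq0 (c : T -> R) :
  (forall x : T -> R, \sum_v c v * x v <= 0) -> forall v, c v = 0.
Proof.
move=> H v; have := H (fun u => if u == v then c v else 0).
rewrite (bigD1 v) //= eqxx big1 => [|u /negbTE->]; last by rewrite mulr0.
rewrite addr0 -expr2 => sq_le0; apply/eqP; rewrite -sqrf_eq0 eq_le sq_le0.
exact: sqr_ge0.
Qed.

Definition project (xb F0 G : T -> R) v :=
  G v - (\sum_u G u * xb u) / (\sum_u F0 u * xb u) * F0 v.

Lemma sum_project_adjoint (xb F0 G x : T -> R) :
  \sum_v project xb F0 G v * x v
  = \sum_v G v * (x v - (\sum_u F0 u * x u) / (\sum_u F0 u * xb u) * xb v).
Proof.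
set d := \sum_u F0 u * xb u.
transitivity (\sum_v G v * x v - (\sum_u G u * xb u) / d * \sum_v F0 v * x v).
  by rewrite mulr_sumr -sumrB; apply: eq_bigr => v _; rewrite /project; ring.
transitivity (\sum_v G v * x v - (\sum_u F0 u * x u) / d * \sum_v G v * xb v).
  by ring.
by rewrite mulr_sumr -sumrB; apply: eq_bigr => v _; ring.
Qed.

Lemma dual_project (I : eqType) (i0 : I) (s : seq I) (F : I -> T -> R)
    (c xb : T -> R) :
  0 < \sum_u F i0 u * xb u ->
  (forall x : T -> R, (forall i, i \in i0 :: s -> \sum_v F i v * x v <= 0) ->
     \sum_v c v * x v <= 0) ->
  forall x : T -> R,
    (forall i, i \in s -> \sum_v project xb (F i0) (F i) v * x v <= 0) ->
    \sum_v project xb (F i0) c v * x v <= 0.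
Proof.
move=> d_gt0 H x Hx; rewrite sum_project_adjoint; apply: H => i.
rewrite inE => /predU1P[-> | i_s]; last by rewrite -sum_project_adjoint Hx.
set d := \sum_u F i0 u * xb u.
have -> : \sum_v F i0 v * (x v - (\sum_u F i0 u * x u) / d * xb v)
    = \sum_v F i0 v * x v - (\sum_u F i0 u * x u) / d * d.
  by rewrite /d mulr_sumr -sumrB; apply: eq_bigr => v _; ring.
by rewrite divfK ?subrr // gt_eqF.
Qed.

Lemma sum_cons_update (I : eqType) (i0 : I) (s : seq I) (a : R)
    (lam : I -> R) (F : I -> T -> R) v :
  i0 \notin s ->
  \sum_(i <- i0 :: s) (if i == i0 then a else lam i) * F i v
  = a * F i0 v + \sum_(i <- s) lam i * F i v.
Proof.
move=> i0_s; rewrite big_cons eqxx; congr (_ + _).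
by apply: eq_big_seq => i i_s; case: eqP => // ei; rewrite -ei i_s in i0_s.
Qed.

(* Induction on the constraints: when the implication already holds without
   [i0], drop it; otherwise a witness [xb] violates only [i0], and projecting
   every vector along [xb] eliminates [i0] (Fourier-Motzkin). *)
Lemma farkas_seq (I : eqType) (s : seq I) (F : I -> T -> R) (c : T -> R) :
  uniq s ->
  (forall x : T -> R, (forall i, i \in s -> \sum_v F i v * x v <= 0) ->
     \sum_v c v * x v <= 0) ->
  exists2 lam : I -> R, (forall i, 0 <= lam i) &
    forall v, c v = \sum_(i <- s) lam i * F i v.
Proof.
elim: s F c => [|i0 s IH] F c /= s_uniq H.
  exists (fun _ => 0) => // v; rewrite big_nil; apply: sum_mul_le0_eq0 => x.
  by apply: H => i; rewrite in_nil.
case/andP: s_uniq => i0_s s_uniq.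
have [Hs|Hs] := classic (forall x : T -> R,
  (forall i, i \in s -> \sum_v F i v * x v <= 0) -> \sum_v c v * x v <= 0).
  have [lam lam_ge0 c_lam] := IH F c s_uniq Hs.
  exists (fun i => if i == i0 then 0 else lam i); first by move=> i; case: ifP.
  by move=> v; rewrite sum_cons_update // mul0r add0r.
have [xb Hxb] := not_all_ex_not _ _ Hs.
have [xb_s /negP] := imply_to_and _ _ Hxb.
rewrite -ltNge => c_xb; set d := \sum_v F i0 v * xb v.
have d_gt0 : 0 < d.
  rewrite ltNge; apply/negP => d_le0; move: c_xb; rewrite ltNge (H xb) //.
  by move=> i; rewrite inE => /predU1P[-> // | /xb_s].
have [mu mu_ge0 c_mu] := IH (fun i => project xb (F i0) (F i))
  (project xb (F i0) c) s_uniq (dual_project d_gt0 H).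
exists (fun i => if i == i0 then
    (\sum_v c v * xb v - \sum_(j <- s) mu j * \sum_v F j v * xb v) / d
  else mu i) => [i|v].
  case: ifP => // _; rewrite divr_ge0 ?(ltW d_gt0) // subr_ge0.
  rewrite (le_trans _ (ltW c_xb)) // big_seq sumr_le0 // => j j_s.
  by rewrite mulr_ge0_le0 ?xb_s.
have sum_project : \sum_(j <- s) mu j * project xb (F i0) (F j) v
  = \sum_(j <- s) mu j * F j v
    - (\sum_(j <- s) mu j * \sum_u F j u * xb u) / d * F i0 v.
  by rewrite !mulr_suml -sumrB; apply: eq_bigr => j _; rewrite /project; ring.
move: (c_mu v); rewrite sum_project /project -/d sum_cons_update // => E.
rewrite -[c v](subrK ((\sum_u c u * xb u) / d * F i0 v)) E; ring.
Qed.

Lemma farkas (I : finType) (P : pred I) (F : I -> T -> R) (c : T -> R) :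
  (forall x : T -> R, (forall i, P i -> \sum_v F i v * x v <= 0) ->
     \sum_v c v * x v <= 0) ->
  exists2 lam : I -> R, (forall i, 0 <= lam i) &
    forall v, c v = \sum_(i | P i) lam i * F i v.
Proof.
move=> H; have [lam lam_ge0 c_lam] : exists2 lam : I -> R, (forall i, 0 <= lam i) &
    forall v, c v = \sum_(i <- [seq i <- index_enum I | P i]) lam i * F i v.
  apply: farkas_seq; first exact/filter_uniq/index_enum_uniq.
  by move=> x Hx; apply: H => i Pi; rewrite Hx // mem_filter Pi mem_index_enum.
by exists lam => // v; rewrite c_lam big_filter.
Qed.

End Farkas.

Section OrderStatistics.
Variables (R : realFieldType) (T : finType) (f : T -> R) (S : {set T}).

Definition order_stat (p : nat) : R :=
  nth 0 (sort <=%R [seq f v | v <- enum S]) p.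

Let sorted_vals := sort <=%R [seq f v | v <- enum S].

Lemma size_sorted_vals : size sorted_vals = #|S|.
Proof. by rewrite size_sort size_map -cardE. Qed.

Lemma sum_order_stat : \sum_(0 <= p < #|S|) order_stat p = \sum_(v in S) f v.
Proof.
rewrite -size_sorted_vals -(big_nth 0 xpredT id).
by rewrite (perm_big _ (permEl (perm_sort _ _))) big_map big_enum.
Qed.

Lemma order_stat_count p : (p < #|S|)%N ->
  (p < #|[set v in S | (f v <= order_stat p)%R]|)%N.
Proof.
move=> p_lt; have srt : sorted <=%R sorted_vals by apply/sort_sorted/le_total.
have -> : #|[set v in S | f v <= order_stat p]| = count (<= order_stat p) sorted_vals.
  rewrite (permP (permEl (perm_sort _ _))) count_map -size_filter.
  rewrite -(card_uniqP (filter_uniq _ (enum_uniq _))); apply: eq_card => v.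
  by rewrite mem_filter mem_enum !inE andbC.
rewrite -(cat_take_drop p.+1 sorted_vals) count_cat.
have /eqP-> : count (<= order_stat p) (take p.+1 sorted_vals)
    == size (take p.+1 sorted_vals).
  rewrite -all_count.
  apply/(all_nthP 0) => i; rewrite size_takel ?size_sorted_vals // => i_le.
  rewrite nth_take //; apply: (sorted_leq_nth le_trans le_refl 0 srt) => //;
    rewrite ?inE size_sorted_vals; lia.
by rewrite size_takel ?size_sorted_vals // leq_addr.
Qed.

Lemma order_stat_witness (C : {set T}) p : (p < #|S|)%N -> (#|S :\: C| <= p)%N ->
  exists2 x, x \in S :&: C & f x <= order_stat p.
Proof.
move=> p_lt out_C.
case: (pickP [pred v | [&& v \in S, v \in C & f v <= order_stat p]]).
  by move=> x /and3P[xS xC small]; exists x; rewrite ?inE ?xS.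
move=> none; suff: (#|[set v in S | (f v <= order_stat p)%R]| <= p)%N.
  by rewrite leqNgt order_stat_count.
apply: leq_trans out_C; apply: subset_leq_card; apply/subsetP => v.
rewrite !inE => /andP[vS small]; rewrite vS andbT; apply/negP => vC.
by have := none v; rewrite /= vS vC small.
Qed.

End OrderStatistics.

Lemma sum_nat_div (R : pzSemiRingType) (F : nat -> R) (c m L : nat) : (0 < c)%N ->
  \sum_(0 <= t < L * c) F (m + t %/ c)%N = c%:R * \sum_(m <= q < m + L) F q.
Proof.
move=> c_gt0; have -> : \sum_(m <= q < m + L) F q = \sum_(0 <= i < L) F (i + m)%N.
  by rewrite -{1}[m]add0n big_addn addKn.
rewrite big_nat_mul mulr_sumr; apply: eq_bigr => i _.
rewrite (@eq_big_nat _ _ _ _ _ _ (fun=> F (i + m)%N)).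
  by rewrite sumr_const_nat mulSn addnK mulr_natl.
move=> t /andP[it ti]; rewrite addnC; congr F; congr addn.
by apply/eqP; rewrite eqn_leq -ltnS ltn_divLR // ti leq_divRL.
Qed.

Lemma sum_wchar_rooted (R : pzRingType) (T : finType) (a b : R) (x0 : T)
    (xs : seq T) (g : T -> R) :
  uniq (x0 :: xs) ->
  \sum_v wchar a b ([set u in x0 :: xs], x0) v * g v
  = a * g x0 + b * \sum_(u <- xs) g u.
Proof.
case/andP => x0_xs xs_uniq; rewrite (bigD1 x0) //= /wchar /= eqxx; congr (_ + _).
rewrite big_uniq // mulr_sumr big_mkcond [RHS]big_mkcond /=; apply: eq_bigr => v _.
case: (eqVneq v x0) => [->|vx0] /=; first by rewrite (negbTE x0_xs).
by rewrite inE in_cons (negbTE vx0) /=; case: (v \in xs); rewrite ?mul0r.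
Qed.

Lemma rooted_Kr_seq (T : finType) (k : nat) (e : rel T) (x0 : T) (xs : seq T) :
  uniq (x0 :: xs) -> size xs = k ->
  {in x0 :: xs &, forall u w, u != w -> e u w} ->
  rooted_Kr k.+1 e ([set u in x0 :: xs], x0).
Proof.
move=> K_uniq K_size K_clique.
rewrite /rooted_Kr /= cardsE (card_uniqP K_uniq) /= K_size eqxx inE mem_head /=.
apply/forallP => u; apply/implyP; rewrite inE => uK.
by apply/forallP => w; apply/implyP; rewrite inE => wK; apply/implyP; apply: K_clique.
Qed.

Section GreedyClique.
Variables (R : realFieldType) (T : finType) (k n : nat) (e : rel T).
Variables (part : T -> 'I_k.+1) (A B : nat) (y : T -> R).
Local Notation N := (A + k * B)%N.
Local Notation class j := [set v | part v == j].

Hypothesis class_size : forall j, #|class j| = n.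
Hypothesis nonnbrs_small : forall v j, j != part v ->
  (N * #|[set u | (part u == j) && ~~ e v u]| <= B * n)%N.

Definition class_stat j := order_stat y (class j).

Lemma nonnbrs_union_card j (xs : seq T) : (forall w, w \in xs -> part w != j) ->
  (N * #|[set u | (part u == j) && ~~ all (e^~ u) xs]| <= size xs * (B * n))%N.
Proof.
elim: xs => [|w xs IH] xs_j.
  rewrite mul0n leqn0 muln_eq0 cards_eq0; apply/orP; right.
  by apply/eqP/setP => u; rewrite !inE andbF.
have -> : [set u | (part u == j) && ~~ all (e^~ u) (w :: xs)] =
    [set u | (part u == j) && ~~ e w u] :|: [set u | (part u == j) && ~~ all (e^~ u) xs].
  by apply/setP => u; rewrite !inE /= negb_and andb_orr.
have w_j : j != part w by rewrite eq_sym xs_j ?mem_head.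
have IHxs := IH (fun u u_xs => xs_j u (mem_behead (s := w :: xs) u_xs)).
rewrite /= mulSn; apply: leq_trans (leq_add (nonnbrs_small w_j) IHxs).
by rewrite -mulnDr leq_mul2l leq_card_setU orbT.
Qed.

Lemma small_common_nbr j (xs : seq T) p : (p < n)%N ->
  (size xs * (B * n) < N * p.+1)%N -> (forall w, w \in xs -> part w != j) ->
  exists x, [/\ part x = j, {in xs, forall w, e w x} & y x <= class_stat j p].
Proof.
move=> p_lt size_xs xs_j; set C := [set u | all (e^~ u) xs].
have out_C : (#|class j :\: C| <= p)%N.
  have -> : class j :\: C = [set u | (part u == j) && ~~ all (e^~ u) xs].
    by apply/setP => u; rewrite !inE andbC.
  have := leq_ltn_trans (nonnbrs_union_card xs_j) size_xs.
  by rewrite ltn_mul2l => /andP[].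
have [|x] := order_stat_witness y _ out_C; first by rewrite class_size.
by rewrite !inE => /andP[/eqP x_j /allP x_C] x_y; exists x.
Qed.

Lemma greedy_clique (x0 : T) (cl : nat -> 'I_k.+1) (pos : nat -> nat) m :
  {in gtn m &, injective cl} ->
  (forall i, (i < m)%N -> (pos i < n)%N /\ (i * (B * n) < N * (pos i).+1)%N) ->
  exists f : nat -> T, [/\ forall i, (i < m)%N -> part (f i) = cl i,
    forall i, (i < m)%N -> y (f i) <= class_stat (cl i) (pos i) &
    forall i i', (i' < i < m)%N -> e (f i') (f i)].
Proof.
elim: m => [|m IH] cl_inj pos_ok.
  by exists (fun=> x0); split=> [i|i|i i']; rewrite ?ltn0 ?andbF.
have cl_inj_m : {in gtn m &, injective cl}.
  by move=> i i' im i'm; apply: cl_inj; rewrite inE ltnW.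
have [f [f_cl f_y f_e]] := IH cl_inj_m (fun i im => pos_ok i (ltnW im)).
set xs := [seq f i | i <- iota 0 m].
have [pos_lt pos_big] := pos_ok m (ltnSn m).
have size_xs : size xs = m by rewrite size_map size_iota.
have xs_out : forall w, w \in xs -> part w != cl m.
  move=> w /mapP[i]; rewrite mem_iota => /andP[_ im] ->; rewrite f_cl //.
  apply/eqP => /cl_inj; rewrite !inE !ltnS (ltnW im) leqnn => /(_ isT isT) i_m.
  by rewrite i_m add0n ltnn in im.
rewrite -{1}size_xs in pos_big.
have [x [x_cl x_e x_y]] := small_common_nbr pos_lt pos_big xs_out.
have lt_m i : (i < m.+1)%N -> i != m -> (i < m)%N.
  by rewrite ltnS leq_eqVlt => /predU1P[->|]; rewrite ?eqxx.
exists (fun i => if i == m then x else f i); split.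
- move=> i i_le; case: (eqVneq i m) => [->|i_m] //.
  exact/f_cl/lt_m.
- move=> i i_le; case: (eqVneq i m) => [->|i_m] //.
  exact/f_y/lt_m.
move=> i i' /andP[i'i i_le].
have i'_m : i' != m by rewrite ltn_eqF // (leq_trans i'i) // -ltnS.
rewrite (negbTE i'_m); case: (eqVneq i m) => [i_m|i_m].
  by apply: x_e; rewrite map_f // mem_iota -i_m.
by apply: f_e; rewrite i'i lt_m.
Qed.

End GreedyClique.

Section RootedCliques.
Variables (R : realFieldType) (T : finType) (k n : nat) (e : rel T).
Variables (part : T -> 'I_k.+1) (A B : nat) (y : T -> R).
Local Notation N := (A + k * B)%N.
Local Notation class j := [set v | part v == j].

Hypotheses (A_gt0 : (0 < A)%N) (B_gt0 : (0 < B)%N) (e_sym : symmetric e).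
Hypothesis class_size : forall j, #|class j| = n.
Hypothesis nonnbrs_small : forall v j, j != part v ->
  (N * #|[set u | (part u == j) && ~~ e v u]| <= B * n)%N.
Hypothesis rooted_ge0 : forall K, rooted_Kr k.+1 e K ->
  0 <= \sum_v wchar A%:R B%:R K v * y v.

Local Notation class_stat := (class_stat part y).

Lemma clique_ineq (cl : nat -> 'I_k.+1) (pos : nat -> nat) :
  {in gtn k.+1 &, injective cl} ->
  (forall i, (i <= k)%N -> (pos i < n)%N /\ (i * (B * n) < N * (pos i).+1)%N) ->
  0 <= A%:R * class_stat (cl k) (pos k) + B%:R * \sum_(i < k) class_stat (cl i) (pos i).
Proof.
move=> cl_inj pos_ok.
have [x0 _] : exists x0, x0 \in class (cl 0).
  apply/card_gt0P; rewrite class_size; exact: leq_ltn_trans (leq0n _) (pos_ok 0 isT).1.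
have [f [f_cl f_y f_e]] := greedy_clique y class_size nonnbrs_small x0 cl_inj pos_ok.
set K := f k :: [seq f i | i <- iota 0 k].
have K_map : K = [seq f i | i <- k :: iota 0 k] by [].
have K_lt i : i \in k :: iota 0 k -> (i < k.+1)%N.
  by rewrite inE mem_iota add0n => /predU1P[->|/andP[_ /ltnW]].
have f_inj : {in k :: iota 0 k &, injective f}.
  move=> i i' /K_lt i_lt /K_lt i'_lt f_eq; apply: cl_inj; rewrite ?inE //.
  by rewrite -f_cl // -[cl i']f_cl // f_eq.
have K_uniq : uniq K.
  by rewrite K_map (map_inj_in_uniq f_inj) /= mem_iota ltnn andbF iota_uniq.
have K_clique : {in K &, forall u w, u != w -> e u w}.
  move=> u w; rewrite K_map => /mapP[i /K_lt i_lt ->] /mapP[i' /K_lt i'_lt ->].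
  case: (ltngtP i i') => [ii'|i'i|->]; last by rewrite eqxx.
    by rewrite f_e // ii'.
  by rewrite e_sym f_e // i'i.
have K_size : size [seq f i | i <- iota 0 k] = k by rewrite size_map size_iota.
have := rooted_ge0 (rooted_Kr_seq K_uniq K_size K_clique); rewrite sum_wchar_rooted // => /le_trans; apply.
rewrite big_map -(big_mkord xpredT (fun i => class_stat (cl i) (pos i))) /index_iota subn0.
rewrite lerD // ler_wpM2l // ?f_y // big_seq [leRHS]big_seq ler_sum // => i.
by rewrite mem_iota => /andP[_ ik]; rewrite f_y // ltnW.
Qed.

(* Each order statistic of a class is listed N times ([stretch]).  For
   [t < A B n], vertex [i < k] reads position [i B n + t / A] and the root
   position [k B n + t / B] of that list, so that as [t] varies each position
   of the i-th block (length B n) is read A times and each position of the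
   root block (length A n) B times. *)
Definition stretch j q := class_stat j (q %/ N)%N.

Definition slot (t i : nat) : nat :=
  if (i < k)%N then (i * (B * n) + t %/ A)%N else (k * (B * n) + t %/ B)%N.

Let N_gt0 : (0 < N)%N. Proof. by rewrite addn_gt0 A_gt0. Qed.

Let N_mul_n : (N * n = k * (B * n) + A * n)%N.
Proof. by rewrite mulnDl mulnA addnC. Qed.

Lemma slot_range t i : (t < A * (B * n))%N -> (i <= k)%N ->
  (i * (B * n) <= slot t i < N * n)%N.
Proof.
move=> t_lt i_le; rewrite /slot; case: ltnP => [i_lt|k_le] /=.
  rewrite leq_addr; have t_A : (t %/ A < B * n)%N by rewrite ltn_divLR // mulnC.
  apply: (@leq_trans (i.+1 * (B * n))); first by rewrite mulSnr ltn_add2l.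
  by rewrite N_mul_n (leq_trans _ (leq_addr _ _)) // leq_mul2r i_lt orbT.
have -> : i = k by apply/eqP; rewrite eqn_leq i_le.
by rewrite leq_addr N_mul_n ltn_add2l ltn_divLR // -mulnA (mulnC n B).
Qed.

Lemma slot_clique_ineq (r : 'I_k.+1) t : (t < A * (B * n))%N ->
  0 <= A%:R * stretch (r + inord k) (slot t k)
       + B%:R * \sum_(i < k) stretch (r + inord i) (slot t i).
Proof.
move=> t_lt; apply: (@clique_ineq (fun i => r + inord i) (fun i => slot t i %/ N)%N).
  move=> i i' i_lt i'_lt /addrI /(congr1 val) /=.
  by rewrite !inordK.
move=> i i_le; have /andP[lo hi] := slot_range t_lt i_le.
rewrite ltn_divLR ?N_gt0 // mulnC hi; split=> //.
by apply: leq_ltn_trans lo _; rewrite mulnC; apply: ltn_ceil N_gt0.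
Qed.

Lemma sum_stretch j :
  \sum_(0 <= q < N * n) stretch j q = N%:R * \sum_(v | part v == j) y v.
Proof.
rewrite (eq_bigl (fun v => v \in class j)) => [|v]; last by rewrite inE.
rewrite -sum_order_stat class_size -(sum_nat_div (class_stat j) 0 n N_gt0) mulnC.
by [].
Qed.

Lemma sum_slot_root j : \sum_(0 <= t < A * (B * n)) stretch j (slot t k)
  = B%:R * \sum_(k * (B * n) <= q < N * n) stretch j q.
Proof.
rewrite /slot ltnn /= [(A * _)%N]mulnCA [(B * _)%N]mulnC.
by rewrite (sum_nat_div (stretch j)) // N_mul_n.
Qed.

Lemma sum_slot i j : (i < k)%N -> \sum_(0 <= t < A * (B * n)) stretch j (slot t i)
  = A%:R * \sum_(i * (B * n) <= q < i.+1 * (B * n)) stretch j q.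
Proof.
move=> i_lt; rewrite /slot i_lt [(A * _)%N]mulnC (sum_nat_div (stretch j)) //.
by rewrite mulSnr.
Qed.

Lemma sum_slots_class j :
  A%:R * \sum_(0 <= t < A * (B * n)) stretch j (slot t k)
  + B%:R * \sum_(i < k) \sum_(0 <= t < A * (B * n)) stretch j (slot t i)
  = (A * B * N)%:R * \sum_(v | part v == j) y v.
Proof.
have blocks : \sum_(0 <= q < N * n) stretch j q
    = \sum_(i < k) \sum_(i * (B * n) <= q < i.+1 * (B * n)) stretch j q
      + \sum_(k * (B * n) <= q < N * n) stretch j q.
  rewrite (@big_cat_nat _ _ _ (k * (B * n))) //=; last by rewrite N_mul_n leq_addr.
  by rewrite big_nat_mul big_mkord.
rewrite sum_slot_root (eq_bigr _ (fun i _ => sum_slot j (ltn_ord i))).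
by rewrite -mulr_sumr !natrM -!mulrA -sum_stretch blocks; ring.
Qed.

Lemma sum_slot_ineqs : \sum_(r : 'I_k.+1) \sum_(0 <= t < A * (B * n))
    (A%:R * stretch (r + inord k) (slot t k)
     + B%:R * \sum_(i < k) stretch (r + inord i) (slot t i))
  = (A * B * N)%:R * \sum_v y v.
Proof.
have rot (c : 'I_k.+1) (G : 'I_k.+1 -> R) : \sum_r G (r + c) = \sum_j G j.
  by rewrite [RHS](reindex_inj (addIr c)).
rewrite (partition_big part xpredT) //= mulr_sumr.
rewrite -(eq_bigr _ (fun j _ => sum_slots_class j)) big_split /=.
rewrite (eq_bigr (fun r => A%:R * \sum_(0 <= t < A * (B * n)) stretch (r + inord k) (slot t k)
    + B%:R * \sum_(i < k) \sum_(0 <= t < A * (B * n)) stretch (r + inord i) (slot t i)));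
  last by move=> r _; rewrite big_split /= -!mulr_sumr exchange_big.
rewrite big_split /=.
rewrite (rot (inord k) (fun j => A%:R * \sum_(0 <= t < A * (B * n)) stretch j (slot t k))).
congr (_ + _); rewrite -!mulr_sumr exchange_big [in RHS]exchange_big; congr (_ * _).
apply: eq_bigr => i _.
by rewrite (rot (inord i) (fun j => \sum_(0 <= t < _) stretch j (slot t i))).
Qed.

Lemma sum_ge0_of_rooted_ge0 : 0 <= \sum_v y v.
Proof.
have : 0 <= (A * B * N)%:R * \sum_v y v.
  rewrite -sum_slot_ineqs; apply: sumr_ge0 => r _; rewrite big_nat.
  by apply: sumr_ge0 => t /andP[_ t_lt]; apply: slot_clique_ineq.
by rewrite pmulr_rge0 // ltr0n !muln_gt0 A_gt0 B_gt0 N_gt0.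
Qed.

End RootedCliques.

Lemma wcharMr (R : pzRingType) (T : finType) (a b c : R) (K : {set T} * T) v :
  wchar (a * c) (b * c) K v = wchar a b K v * c.
Proof. by rewrite /wchar; case: (v == K.2); case: (v \in K.1); rewrite ?mul0r. Qed.

Lemma nonnbrs_card (T : finType) (r n : nat) (e : rel T) (part : T -> 'I_r) v j :
  #|[set u | part u == j]| = n ->
  #|[set u | (part u == j) && ~~ e v u]| = (n - deg_into e part v j)%N.
Proof.
move=> class_size; rewrite /deg_into -class_size.
rewrite -(cardsID [set u | e v u] [set u | part u == j]).
rewrite (_ : [set u | part u == j] :&: [set u | e v u] = [set u | (part u == j) && e v u]).
  by rewrite addKn; apply: eq_card => u; rewrite !inE andbC.
by apply/setP => u; rewrite !inE.
Qed.

Lemma rat_common_scale (a b : rat) : 0 < a -> 0 < b ->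
  exists A B : nat, exists2 s : rat, 0 < s &
    [/\ (0 < A)%N, (0 < B)%N, a = A%:R * s & b = B%:R * s].
Proof.
move=> a_gt0 b_gt0; exists (`|numq a| * `|denq b|)%N, (`|numq b| * `|denq a|)%N.
exists (denq a * denq b)%:~R^-1; first by rewrite invr_gt0 ltr0z mulr_gt0.
rewrite !muln_gt0 !absz_gt0 !numq_eq0 !denq_eq0 !gt_eqF //.
have da_neq0 : (denq a)%:~R != 0 :> rat by rewrite intr_eq0 denq_neq0.
have db_neq0 : (denq b)%:~R != 0 :> rat by rewrite intr_eq0 denq_neq0.
rewrite !natrM !natr_absz !gtr0_norm ?numq_gt0 ?denq_gt0 // intrM.
by split=> //; rewrite -[LHS]divq_num_den; field; rewrite da_neq0 db_neq0.
Qed.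

Lemma nonnbrs_small_of_delta_star (R : realFieldType) (T : finType) (k n : nat)
    (e : rel T) (part : T -> 'I_k.+1) (A B : nat) :
  (0 < A)%N -> (forall j, #|[set v | part v == j]| = n) ->
  delta_star_ge e part ((1 - B%:R / (A + k * B)%:R) * (n%:R : R)) ->
  forall v j, j != part v ->
  ((A + k * B) * #|[set u | (part u == j) && ~~ e v u]| <= B * n)%N.
Proof.
move=> A_gt0 class_size delta v j j_v; rewrite (nonnbrs_card _ _ (class_size j)).
have N_gt0 : 0 < (A + k * B)%:R :> R by rewrite ltr0n addn_gt0 A_gt0.
have := delta v j j_v; rewrite -(ler_pM2l N_gt0) mulrA mulrBr mulr1 mulrCA divff ?gt_eqF //.
rewrite mulr1 mulrBl lerBlDr -!natrM -natrD ler_nat => deg_le.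
rewrite mulnBr; lia.
Qed.

Theorem lemma2p2 (R : realFieldType) (r n : nat) (a b : rat)
    (T : finType) (e : rel T) (part : T -> 'I_r) :
  (3 <= r)%N -> 0 < a -> a <= b ->
  balanced_rpartite n e part ->
  let h := a + (r.-1)%:R * b in
  delta_star_ge e part ((1 - ratr (b / h)) * (n%:R : R)) ->
  exists w : {set T} * T -> R,
    perfect_frac_tiling r e (ratr a) (ratr b) w.
Proof.
(* only [0 < r] is used *)
case: r part => [//|k] part _ a_gt0 a_le_b [e_sym _ _ class_size] h.
have [A [B [s s_gt0 [A_gt0 B_gt0 a_As b_Bs]]]] :=
  rat_common_scale a_gt0 (lt_le_trans a_gt0 a_le_b).
have ratio : ratr (b / h) = B%:R / (A + k * B)%:R :> R.
  have N_gt0 : 0 < A%:R + k%:R * B%:R :> rat.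
    by rewrite -natrM -natrD ltr0n addn_gt0 A_gt0.
  have -> : B%:R / (A + k * B)%:R = ratr (B%:R / (A + k * B)%:R) :> R.
    by rewrite fmorph_div !rmorph_nat.
  congr ratr.
  rewrite /h a_As b_Bs /= natrD natrM; field.
  by rewrite gt_eqF //= mulrA -mulrDl mulf_neq0 ?gt_eqF.
rewrite ratio => /(nonnbrs_small_of_delta_star A_gt0 class_size) nonnbrs_small.
suff [w w_ge0 w_tiles] : exists2 w : {set T} * T -> R, (forall K, 0 <= w K) &
    forall v, 1 = \sum_(K | rooted_Kr k.+1 e K) w K * wchar (ratr a) (ratr b) K v.
  by exists w; split=> // v; rewrite -w_tiles.
apply: farkas => x x_le0; rewrite -oppr_ge0 -sumrN.
apply: (sum_ge0_of_rooted_ge0 A_gt0 B_gt0 e_sym class_size nonnbrs_small) => K K_rooted.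
have := x_le0 K K_rooted; rewrite a_As b_Bs !rmorphM /= !ratr_nat.
under eq_bigr do rewrite wcharMr mulrAC.
rewrite -mulr_suml pmulr_lle0 ?ltr0q // -oppr_ge0 -sumrN => S_ge0.
by under eq_bigr do rewrite mul1r mulrN.
Qed.
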